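(* Let $\Gamma$ be a Deza graph with parameters $(n,k,k-1,a)$, $k>1$, $\beta=1$, and let $\Gamma''$ be the graph defined below. Then $\Gamma''$ is a Deza graph with parameters $(\frac{n}{2},\frac{k-1}{2},\frac{a}{2},\frac{a-2}{2})$. More precisely, for two distinct vertices $\{x,x_b\}$ and $\{y,y_b\}$ of $\Gamma''$, call the pair special if $x$ and $y$ are $NA$-vertices, $\{x',x_b'\}\ne\{y,y_b\}$, and there are exactly $8$ edges of $\Gamma$ between $\{x,x',x_b,x_b'\}$ and $\{y,y',y_b,y_b'\}$. If the two vertices are adjacent in $\Gamma''$, they have $\frac{a}{2}$ common neighbours in $\Gamma''$ if the pair is special and $\frac{a-2}{2}$ otherwise; if they are non-adjacent, they have $\frac{a-2}{2}$ common neighbours if the pair is special and $\frac{a}{2}$ otherwise.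
   Context: A Deza graph with parameters $(n,k,b,a)$, $a\le b$, is a $k$-regular graph on $n$ vertices in which any two distinct vertices have $a$ or $b$ common neighbours; $\beta$ is the number of vertices $u\ne v$ with exactly $b$ common neighbours with a given vertex $v$. Since $\beta=1$, for each vertex $x$ let $x_b$ denote the unique vertex having $b=k-1$ common neighbours with $x$. A vertex $x$ is an $A$-vertex if $x$ is adjacent to $x_b$, and an $NA$-vertex otherwise. For an $NA$-vertex $x$, $x'$ denotes the unique neighbour of $x$ not adjacent to $x_b$, and $x_b'=(x')_b=(x_b)'$. Let $\Gamma'$ be obtained from $\Gamma$ by removing all edges $\{x,x_b\}$ with $x$ an $A$-vertex and all edges $\{x,x'\}$ with $x$ an $NA$-vertex. Let $\Gamma''$ be the graph whose vertices are the pairs $\{x,x_b\}$, two distinct pairs $\{x,x_b\}$ and $\{y,y_b\}$ being adjacent iff all four edges between them are present in $\Gamma'$. *)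

From mathcomp Require Import all_boot.
Set Implicit Arguments. Unset Strict Implicit. Unset Printing Implicit Defensive.

(* A simple graph is a symmetric irreflexive relation e on a finType T. *)
Section DezaDefs.
Variables (T : finType) (e : rel T) (b : nat).

Definition cn (x y : T) : nat := #|[set z | e x z && e y z]|.

(* x_b : the (unique, under beta = 1) vertex u <> x having b common
   neighbours with x; default x if none exists *)
Definition xb (x : T) : T := odflt x [pick y | (y != x) && (cn x y == b)].

Definition isA (x : T) : bool := e x (xb x).

Definition xpr (x : T) : T := odflt x [pick y | e x y && ~~ e (xb x) y].

Definition xbpr (x : T) : T := xpr (xb x).

Definition removed (u v : T) : bool :=
  (isA u && (v == xb u)) || (~~ isA u && (v == xpr u)).

Definition e1 (u v : T) : bool := [&& e u v, ~~ removed u v & ~~ removed v u].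

Definition V2 : {set {set T}} := [set [set x; xb x] | x : T].

Definition adj2 (P Q : {set T}) : bool :=
  (P != Q) && [forall u in P, forall v in Q, e1 u v].

Definition deg2 (P : {set T}) : nat := #|[set R in V2 | adj2 P R]|.

Definition cn2 (P Q : {set T}) : nat := #|[set R in V2 | adj2 P R && adj2 Q R]|.

Definition nedges (S1 S2 : {set T}) : nat :=
  #|[set p in setX S1 S2 | e p.1 p.2]|.

Definition special (x y : T) : bool :=
  [&& ~~ isA x, ~~ isA y,
      [set xpr x; xbpr x] != [set y; xb y] &
      nedges [set x; xpr x; xb x; xbpr x] [set y; xpr y; xb y; xbpr y] == 8].

End DezaDefs.

(* Let x_b be the partner of x and x' its private neighbour, the unique neighbour of x
   outside N(x_b).  For w outside {x, x_b}, comparing cn(x, w) = a = cn(x_b, w) shows that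
   x' and x_b' have the same neighbours there; hence they have k - 1 common neighbours, so
   x_b' = (x')_b and x'' = x.  Thus Γ' is Γ minus the perfect matching {x, x'}, its
   adjacency is invariant under x ↦ x_b in each argument, and every count in Γ'' is half
   the corresponding count in Γ'.  This gives 2 deg'' = k - 1 and
   2 cn''({x, x_b}, {y, y_b}) + [x' ~ y] + [x ~ y'] = cn(x, y) = a.  Applied to {x, x'} the
   latter makes a even as soon as there is an NA-vertex, which forces [x' ~ y] = [x ~ y'].
   Finally the quadruples {x, x', x_b, x_b'} are unions of two pairs, so counting the edges
   between two of them shows that (x, y) is special exactly when [x ~' y] <> [x ~ y']. *)

From Pilot Require Import Defs.
From mathcomp Require Import all_boot zify.
Set Implicit Arguments. Unset Strict Implicit. Unset Printing Implicit Defensive.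

Lemma pick_uniq (T : finType) (P : pred T) x0 y :
  #|[set y | P y]| = 1 -> P y = (y == odflt x0 [pick y | P y]).
Proof.
move/eqP/cards1P=> [z Ez]; have Pz u : P u = (u == z) by rewrite -in_set1 -Ez inE.
by rewrite Pz; case: pickP => [u | /(_ z)]; rewrite Pz ?eqxx // => /eqP ->.
Qed.

Lemma nedges_sum (T : finType) (e : rel T) (S1 S2 : {set T}) :
  nedges e S1 S2 = \sum_(u in S1) \sum_(v in S2) e u v.
Proof.
rewrite /nedges -sum1_card (eq_bigl (fun q => (q.1 \in S1) && ((q.2 \in S2) && e q.1 q.2))).
  rewrite -(pair_big_dep _ (fun u v => (v \in S2) && e u v) (fun _ _ => 1)).
  by apply: eq_bigr => u _; rewrite big_mkcondr; apply: eq_bigr => v _; case: (e u v).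
by move=> [u v]; rewrite !inE andbA.
Qed.

Lemma sum_setU (T : finType) (A B : {set T}) (F : T -> nat) : [disjoint A & B] ->
  \sum_(i in A :|: B) F i = \sum_(i in A) F i + \sum_(i in B) F i.
Proof. by move=> AB; rewrite -bigU //; apply: eq_bigl => i; rewrite inE. Qed.

Section Involution.
Variables (T : finType) (f : T -> T).
Hypotheses (fK : involutive f) (f_neq : forall x, f x != x).

Local Notation pair x := [set x; f x].

Lemma pair_f x : pair (f x) = pair x.
Proof. by rewrite fK setUC. Qed.

Lemma pair_mem x y : y \in pair x -> pair y = pair x.
Proof. by rewrite !inE => /orP [] /eqP ->; rewrite ?pair_f. Qed.

Lemma pair_eqE x y : (pair x == pair y) = (y \in pair x).
Proof. by apply/eqP/idP => [->|/pair_mem <-]; rewrite ?set21. Qed.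

Lemma disjoint_pairs x y : pair x != pair y -> [disjoint pair x & pair y].
Proof.
move=> neq; apply/pred0P => z /=; apply/negbTE/andP => -[/pair_mem Ex /pair_mem Ey].
by move: neq; rewrite -Ex -Ey eqxx.
Qed.

Lemma mem_pair_map (g : T -> T) u w : injective g -> (forall z, f (g z) = g (f z)) ->
  (g u \in pair (g w)) = (u \in pair w).
Proof. by move=> g_inj fg; rewrite fg !inE !(inj_eq g_inj). Qed.

Lemma sum_pair (F : T -> nat) x :
  (forall z, F (f z) = F z) -> \sum_(z in pair x) F z = 2 * F x.
Proof.
by move=> Ff; rewrite big_setU1 ?big_set1 ?inE 1?eq_sym ?f_neq //= Ff addnn mul2n.
Qed.

Lemma card_pairs (S : {set T}) :
  (forall z, (f z \in S) = (z \in S)) -> #|S| = 2 * #|[set pair z | z in S]|.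
Proof.
move=> Sf; rewrite (card_partition (preim_partitionP (fun z => pair z) S)).
have -> : preim_partition (fun z => pair z) S = [set pair z | z in S].
  apply: eq_in_imset => z zS; apply/setP => y; rewrite inE pair_eqE.
  case: (boolP (y \in pair z)); rewrite ?andbF ?andbT //.
  by rewrite !inE => /orP [] /eqP ->; rewrite ?Sf.
rewrite (eq_bigr (fun _ => 2)) ?sum_nat_const 1?mulnC // => _ /imsetP [z _ ->].
by rewrite cards2 eq_sym f_neq.
Qed.

End Involution.

Record deza_beta1 (T : finType) (e : rel T) (k a : nat) : Prop := DezaBeta1 {
  deza_sym : symmetric e;
  deza_irr : irreflexive e;
  deza_k_gt1 : 1 < k;
  deza_regular : forall x, #|[set y | e x y]| = k;
  deza_cn : forall x y, x != y -> cn e x y = a \/ cn e x y = k.-1;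
  deza_beta : forall x, #|[set y | (y != x) && (cn e x y == k.-1)]| = 1 }.

Section DezaBeta1.
Variables (T : finType) (e : rel T) (k a : nat) (G : deza_beta1 e k a).

Let eC : symmetric e := deza_sym G.
Let e_irr : irreflexive e := deza_irr G.

Local Notation b := k.-1.
Local Notation cn := (cn e).
Local Notation xb := (xb e b).
Local Notation xpr := (xpr e b).
Local Notation isA := (isA e b).
Local Notation e' := (e1 e b).
Local Notation pair x := [set x; xb x].

Lemma cnC x y : cn x y = cn y x.
Proof. by apply: eq_card => z; rewrite !inE andbC. Qed.

Lemma xbP x y : ((y != x) && (cn x y == b)) = (y == xb x).
Proof. exact: pick_uniq (deza_beta G x). Qed.

Lemma xb_neq x : xb x != x.
Proof. by have /andP [] : (xb x != x) && (cn x (xb x) == b) by rewrite xbP. Qed.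

Lemma cn_xb x : cn x (xb x) = b.
Proof. by have /andP [_ /eqP] : (xb x != x) && (cn x (xb x) == b) by rewrite xbP. Qed.

Lemma xbK : involutive xb.
Proof. by move=> x; apply/eqP; rewrite eq_sym -xbP eq_sym xb_neq cnC cn_xb eqxx. Qed.

Lemma cn_other x y : y != x -> y != xb x -> cn x y = a.
Proof.
move=> yx yxb; case: (deza_cn G (x := x) (y := y)); rewrite 1?eq_sym // => /eqP cnb.
by move: yxb; rewrite -xbP yx cnb.
Qed.

Lemma card_nbr_not_xb x : #|[set y | e x y && ~~ e (xb x) y]| = 1.
Proof.
have := cardsID [set y | e (xb x) y] [set y | e x y]; rewrite (deza_regular G).
have -> : [set y | e x y] :&: [set y | e (xb x) y] = [set y | e x y && e (xb x) y].
  by apply/setP => y; rewrite !inE.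
have -> : [set y | e x y] :\: [set y | e (xb x) y] = [set y | e x y && ~~ e (xb x) y].
  by apply/setP => y; rewrite !inE andbC.
by have := cn_xb x; rewrite /Defs.cn => ->; have := deza_k_gt1 G; lia.
Qed.

Lemma xprP x y : (e x y && ~~ e (xb x) y) = (y == xpr x).
Proof. exact: pick_uniq (card_nbr_not_xb x). Qed.

Lemma e_xpr x : e x (xpr x).
Proof. by have /andP [] : e x (xpr x) && ~~ e (xb x) (xpr x) by rewrite xprP. Qed.

Lemma xb_nadj_xpr x : ~~ e (xb x) (xpr x).
Proof. by have /andP [] : e x (xpr x) && ~~ e (xb x) (xpr x) by rewrite xprP. Qed.

Lemma e_xb_of_nxpr x z : e x z -> z != xpr x -> e (xb x) z.
Proof. by move=> exz; apply: contraR => nxbz; rewrite -xprP exz. Qed.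

Lemma xprA x : isA x -> xpr x = xb x.
Proof. by move=> Ax; apply/esym/eqP; rewrite -xprP e_irr andbT. Qed.

Lemma isA_xb x : isA (xb x) = isA x.
Proof. by rewrite /Defs.isA xbK eC. Qed.

Lemma cn_split x w :
  cn x w = #|[set z | [&& e x z, e (xb x) z & e w z]]| + e w (xpr x).
Proof.
rewrite /Defs.cn (cardsD1 (xpr x)) addnC inE e_xpr eC; congr (_ + _).
apply: eq_card => z; rewrite !inE; case: (eqVneq z (xpr x)) => [->|nz] /=.
  by rewrite (negbTE (xb_nadj_xpr x)) andbF.
by case exz: (e x z) => //=; rewrite e_xb_of_nxpr.
Qed.

Lemma e_xpr_xb x w : w != x -> w != xb x -> e (xpr x) w = e (xpr (xb x)) w.
Proof.
move=> wx wxb; have := cn_split (xb x) w; rewrite xbK cn_other ?xbK //.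
have := cn_split x w; rewrite cn_other // => ->.
rewrite (eq_card (B := [set z | [&& e x z, e (xb x) z & e w z]])); last first.
  by move=> z; rewrite !inE andbCA.
by move/addnI; rewrite ![e _ w]eC; case: (e w _); case: (e w _).
Qed.

Lemma xb_xpr x : xb (xpr x) = xpr (xb x).
Proof.
apply/esym/eqP; rewrite -xbP; apply/andP; split.
  by apply: contraNneq (xb_nadj_xpr (xb x)) => ->; rewrite xbK e_xpr.
apply/eqP; rewrite /Defs.cn.
have -> : [set z | e (xpr x) z && e (xpr (xb x)) z] = [set z | e (xpr x) z] :\ x.
  apply/setP => z; rewrite !inE; case: (eqVneq z x) => [->|zx] /=.
    by have := xb_nadj_xpr (xb x); rewrite xbK eC => /negbTE ->; rewrite andbF.
  case: (eqVneq z (xb x)) => [->|zxb]; first by rewrite eC (negbTE (xb_nadj_xpr x)).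
  by rewrite -e_xpr_xb // andbb.
have := cardsD1 x [set z | e (xpr x) z].
by rewrite (deza_regular G) inE eC e_xpr => Ek; rewrite [in RHS]Ek.
Qed.

Lemma xprK : involutive xpr.
Proof.
move=> x; apply/eqP; rewrite eq_sym -xprP [e _ x]eC e_xpr xb_xpr /=.
by have := xb_nadj_xpr (xb x); rewrite xbK eC.
Qed.

Lemma xpr_eq u v : (u == xpr v) = (v == xpr u).
Proof. by apply/eqP/eqP => ->; rewrite xprK. Qed.

Lemma e1E u v : e' u v = e u v && (v != xpr u).
Proof.
have removedE w z : removed e b w z = (z == xpr w).
  by rewrite /removed; case: (boolP (isA w)) => [/xprA ->|]; rewrite ?orbF.
by rewrite /e1 !removedE xpr_eq andbb.
Qed.

Lemma e1C u v : e' u v = e' v u.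
Proof. by rewrite !e1E eC xpr_eq. Qed.

Lemma e1_xb x z : e' (xb x) z = e' x z.
Proof.
suff e1_xbW y : e' y z -> e' (xb y) z.
  by apply/idP/idP => /e1_xbW //; rewrite xbK.
rewrite !e1E => /andP [eyz zy]; rewrite e_xb_of_nxpr //=.
by apply: contraNneq (xb_nadj_xpr (xb y)) => <-; rewrite xbK.
Qed.

Lemma e1_pair u v x y : u \in pair x -> v \in pair y -> e' u v = e' x y.
Proof.
by rewrite !inE => /orP [] /eqP -> /orP [] /eqP ->; rewrite ?e1_xb // e1C ?e1_xb // e1C.
Qed.

Lemma e1_pair_neq x y : e' x y -> pair x != pair y.
Proof.
apply: contraTneq => Exy; have yx : y \in pair x by rewrite Exy set21.
by rewrite (e1_pair (set21 _ _) yx) e1E e_irr.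
Qed.

Lemma adj2E x y : adj2 e b (pair x) (pair y) = e' x y.
Proof.
apply/andP/idP => [[_ /forall_inP /(_ x (set21 _ _)) /forall_inP]|exy].
  by apply; rewrite set21.
split; first exact: e1_pair_neq.
by apply/forall_inP => u ux; apply/forall_inP => v vy; rewrite (e1_pair ux vy).
Qed.

Lemma two_card_V2 (P : pred {set T}) :
  2 * #|[set R in V2 e b | P R]| = #|[set z | P (pair z)]|.
Proof.
rewrite (card_pairs xbK xb_neq); last by move=> z; rewrite !inE (pair_f xbK).
congr (2 * _); apply: eq_card => R; rewrite inE; apply/andP/imsetP.
  by case=> /imsetP [z _ ->] PR; exists z; rewrite ?inE.
by case=> z; rewrite inE => Pz ->; split; first exact: imset_f.
Qed.

Lemma card_V2 : 2 * #|V2 e b| = #|T|.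
Proof.
have := two_card_V2 predT; rewrite cardsT => <-.
by congr (2 * _); apply: eq_card => R; rewrite inE andbT.
Qed.

Lemma deg2_pair x : 2 * deg2 e b (pair x) = b.
Proof.
rewrite /deg2 two_card_V2 (eq_card (B := [set z | e x z] :\ xpr x)).
  have := cardsD1 (xpr x) [set z | e x z].
  by rewrite (deza_regular G) inE e_xpr => Ek; rewrite [in RHS]Ek.
by move=> z; rewrite !inE adj2E e1E andbC.
Qed.

Lemma cn2_card x y :
  2 * cn2 e b (pair x) (pair y) = #|[set z | e' x z && e' y z]|.
Proof. by rewrite /cn2 two_card_V2; apply: eq_card => z; rewrite !inE !adj2E. Qed.

Lemma cn2_pair x y : pair x != pair y ->
  2 * cn2 e b (pair x) (pair y) + e (xpr x) y + e x (xpr y) = a.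
Proof.
rewrite (pair_eqE xbK) !inE negb_or => /andP [yx yxb].
rewrite cn2_card -(cn_other yx yxb) /Defs.cn.
rewrite [in RHS](cardsD1 (xpr x)) [in RHS](cardsD1 (xpr y)) !inE e_xpr e_xpr.
rewrite (inj_eq (can_inj xprK)) yx [e y _]eC andbT /=.
rewrite [RHS]addnA [RHS]addnC [RHS]addnA; congr (_ + _ + _).
apply: eq_card => z; rewrite !inE !e1E.
by case: (z != xpr x); case: (z != xpr y); rewrite /= ?andbT ?andbF.
Qed.

Lemma pair_xpr_neq x : ~~ isA x -> pair x != pair (xpr x).
Proof.
move=> NAx; rewrite (pair_eqE xbK) !inE negb_or; apply/andP; split.
  by apply: contraTneq (e_xpr x) => ->; rewrite e_irr.
by apply: contraNneq NAx => Ex; rewrite /Defs.isA -Ex e_xpr.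
Qed.

Lemma e_xb_A x y : isA x -> y \notin pair x -> e (xb x) y = e x y.
Proof.
move=> Ax; rewrite !inE negb_or => /andP [yx yxb]; apply/idP/idP => exy.
  by have := e_xb_of_nxpr exy; rewrite xprA ?isA_xb // xbK; apply.
by apply: e_xb_of_nxpr exy _; rewrite xprA.
Qed.

Lemma a_even x : ~~ isA x -> ~~ odd a.
Proof.
move=> NAx; have := cn2_pair (pair_xpr_neq NAx).
by rewrite xprK !e_irr /= !addn0 => <-; rewrite oddM.
Qed.

Lemma e_xpr_sym x y : pair x != pair y -> e (xpr x) y = e x (xpr y).
Proof.
move=> neq; have [/andP [Ax Ay] | a_ev] : (isA x && isA y) \/ ~~ odd a.
- case: (boolP (isA x)) => [Ax|/a_even]; last by right.
  by case: (boolP (isA y)) => [Ay|/a_even]; [left; apply/andP | right].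
- have yx : y \notin pair x by rewrite -(pair_eqE xbK).
  have xy : x \notin pair y by rewrite -(pair_eqE xbK) eq_sym.
  by rewrite !xprA // (e_xb_A Ax yx) [e x (xb y)]eC (e_xb_A Ay xy) eC.
- move: a_ev; rewrite -(cn2_pair neq) 2!oddD oddM /=.
  by case: (e _ y); case: (e x _).
Qed.

Lemma cn2_pairE x y : pair x != pair y ->
  2 * cn2 e b (pair x) (pair y) + 2 * e x (xpr y) = a.
Proof. by move=> neq; rewrite -(cn2_pair neq) (e_xpr_sym neq) -addnA addnn -mul2n. Qed.

Local Notation quad x := (pair x :|: pair (xpr x)).

Lemma mem_pair_xpr u w : (xpr u \in pair (xpr w)) = (u \in pair w).
Proof. exact: mem_pair_map (can_inj xprK) xb_xpr. Qed.

Lemma pair_xpr_eq u w : (pair (xpr u) == pair (xpr w)) = (pair u == pair w).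
Proof. by rewrite !(pair_eqE xbK) mem_pair_xpr. Qed.

Lemma quadE x : [set x; xpr x; xb x; xbpr e b x] = quad x.
Proof.
apply/setP => z; rewrite /xbpr -xb_xpr !inE -!orbA.
by congr (_ || _); apply: orbCA.
Qed.

Lemma mem_quad_xpr u x : (xpr u \in quad x) = (u \in quad x).
Proof.
have Ex : pair x = pair (xpr (xpr x)) by rewrite xprK.
by rewrite in_setU [in RHS]in_setU {1}Ex !mem_pair_xpr orbC.
Qed.

Lemma disjoint_quad x y : pair x != pair y -> pair (xpr x) != pair y ->
  [disjoint quad x & quad y].
Proof.
move=> nxy nx'y; have nxy' : pair x != pair (xpr y) by rewrite -pair_xpr_eq xprK.
have nx'y' : pair (xpr x) != pair (xpr y) by rewrite pair_xpr_eq.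
apply/pred0P => z /=; apply/negbTE/andP.
case=> /setUP [] /(pair_mem xbK) Ex /setUP [] /(pair_mem xbK) Ey;
by move: nxy nx'y nxy' nx'y'; rewrite -Ex -Ey eqxx.
Qed.

(* Γ' only lacks the edges {u, u'}, and u' stays in the quadruple of u. *)
Lemma e_quad x y u v : [disjoint quad x & quad y] ->
  u \in quad x -> v \in quad y -> e u v = e' u v.
Proof.
move=> dis ux vy; rewrite e1E; case: (eqVneq v (xpr u)) => [vu|]; rewrite ?andbT //.
by rewrite (disjointFr dis) // in vy; rewrite vu mem_quad_xpr.
Qed.

Lemma nedges_quad x y : ~~ isA x -> ~~ isA y -> [disjoint quad x & quad y] ->
  nedges e (quad x) (quad y) =
  4 * (e x y + e x (xpr y) + e (xpr x) y + e (xpr x) (xpr y)).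
Proof.
move=> NAx NAy dis; have E := e_quad dis.
have inner u : \sum_(v in quad y) e' u v = 2 * e' u y + 2 * e' u (xpr y).
  rewrite sum_setU ?(disjoint_pairs xbK) ?pair_xpr_neq // !(sum_pair xb_neq) //;
  by move=> z; rewrite e1C e1_xb e1C.
rewrite nedges_sum (eq_bigr (fun u => 2 * e' u y + 2 * e' u (xpr y))); last first.
  by move=> u ux; rewrite -inner; apply: eq_bigr => v vy; rewrite E.
rewrite sum_setU ?(disjoint_pairs xbK) ?pair_xpr_neq // !(sum_pair xb_neq);
  try by move=> z; rewrite !e1_xb.
by rewrite -!E ?inE ?eqxx ?orbT //; lia.
Qed.

Lemma special_xor x y : pair x != pair y ->
  special e b x y = e' x y (+) e x (xpr y).
Proof.
move=> neq; have yx : y \notin pair x by rewrite -(pair_eqE xbK).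
have xy : x \notin pair y by rewrite -(pair_eqE xbK) eq_sym.
rewrite /special; case: (boolP (isA x)) => [Ax|NAx] /=.
  move: (yx); rewrite !inE => /norP [_ /negbTE yxb].
  by rewrite e1E -(e_xpr_sym neq) xprA // (e_xb_A Ax yx) yxb /= andbT addbb.
case: (boolP (isA y)) => [Ay|NAy] /=.
  move: (xy); rewrite !inE => /norP [_ /negbTE xyb].
  by rewrite e1C e1E xprA // xyb /= andbT [e x _]eC (e_xb_A Ay xy) addbb.
have -> : [set xpr x; xbpr e b x] = pair (xpr x) by rewrite /xbpr xb_xpr.
case: (eqVneq (pair (xpr x)) (pair y)) => [Ex'y | nx'y] /=.
  have y_x' : y \in pair (xpr x) by rewrite -(pair_eqE xbK) Ex'y.
  rewrite (e1_pair (set21 _ _) y_x') e1E eqxx andbF /=.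
  have : xpr y \in pair (xpr (xpr x)) by rewrite mem_pair_xpr.
  by rewrite xprK !inE => /orP [] /eqP ->; rewrite ?e_irr //; apply/esym/negbTE.
rewrite !quadE (nedges_quad NAx NAy (disjoint_quad neq nx'y)).
have nxy' : pair x != pair (xpr y) by rewrite -pair_xpr_eq xprK.
rewrite (e_xpr_sym neq) (e_xpr_sym nxy') xprK e1E.
have -> : y != xpr x by apply: contraNneq nx'y => ->.
by case: (e x y); case: (e x (xpr y)).
Qed.

End DezaBeta1.

Theorem lemma20 (T : finType) (e : rel T) (n k a : nat) :
  symmetric e -> irreflexive e ->
  #|T| = n -> 1 < k ->
  (forall x : T, #|[set y | e x y]| = k) ->
  a <= k.-1 ->
  (forall x y : T, x != y -> cn e x y = a \/ cn e x y = k.-1) ->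
  (forall x : T, #|[set y | (y != x) && (cn e x y == k.-1)]| = 1) ->
  [/\ 2 * #|V2 e k.-1| = n,
      (forall P, P \in V2 e k.-1 -> 2 * deg2 e k.-1 P = k.-1),
      (forall Q R, Q \in V2 e k.-1 -> R \in V2 e k.-1 -> Q != R ->
          2 * cn2 e k.-1 Q R = a \/ 2 * cn2 e k.-1 Q R + 2 = a) &
      (forall x y : T,
          [set x; xb e k.-1 x] != [set y; xb e k.-1 y] ->
          let P := [set x; xb e k.-1 x] in
          let Q := [set y; xb e k.-1 y] in
          let c := cn2 e k.-1 P Q in
          if adj2 e k.-1 P Q then
            (if special e k.-1 x y then 2 * c = a else 2 * c + 2 = a)
          else
            (if special e k.-1 x y then 2 * c + 2 = a else 2 * c = a))].
Proof.
move=> eC e_irr <- k_gt1 deg_k _ cn_ab beta1.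
have G : deza_beta1 e k a by split.
split.
- exact: card_V2 G.
- by move=> _ /imsetP [x _ ->]; apply: deg2_pair G x.
- move=> _ _ /imsetP [x _ ->] /imsetP [y _ ->] /(cn2_pairE G) <-.
  by case: (e x _); [right | left]; rewrite ?muln1 ?muln0 ?addn0.
- move=> x y neq /=; rewrite (adj2E G) (special_xor G neq) -(cn2_pairE G neq).
  by case: (e1 _ _ x y); case: (e x _); rewrite /= ?muln1 ?muln0 ?addn0.
Qed.
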